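(* Let $N\ge 0$ be an integer, and let $Q_K(f)=\sum_{k=1}^K w_k f(\xi_k)$ be a quadrature rule on the unit sphere $S^2\subset\mathbb{R}^3$ with real weights $w_k$ and nodes $\xi_k\in S^2$ having polar coordinates $(\theta_k,\phi_k)$, i.e. $\xi_k=(\sin\theta_k\cos\phi_k,\sin\theta_k\sin\phi_k,\cos\theta_k)$. Suppose: (i) for every $k$ there is a unique $j$ such that $\xi_j$ is the point with polar coordinates $(\theta_k,\phi_k+\pi)$ (i.e. $\xi_j=R_z\xi_k$ where $R_z(x,y,z)=(-x,-y,z)$), and $w_j=w_k$; (ii) for every $k$ there is a unique $j$ such that $\xi_j$ is the point with coordinates $(\theta_k+\pi,\pi-\phi_k)$ under the parametrization $(\theta,\phi)\mapsto(\sin\theta\cos\phi,\sin\theta\sin\phi,\cos\theta)$ (i.e. $\xi_j=R_x\xi_k$ where $R_x(x,y,z)=(x,-y,-z)$), and $w_j=w_k$. Then the system $$\sum_{k=1}^K w_k Y_n^m(\theta_k,\phi_k)=\sqrt{4\pi}\,\delta_{n0}\delta_{m0}\quad\text{for all integers } |m|\le n\le N$$ holds if and only if the following real system holds: $$\operatorname{Re}\sum_{k=1}^K w_k Y_n^m(\theta_k,\phi_k)=\sqrt{4\pi}\,\delta_{n0}\delta_{m0}\quad\text{for all }(m,n)\text{ with } m,n \text{ even},\ 0\le m\le n\le N,$$ $$\operatorname{Im}\sum_{k=1}^K w_k Y_n^m(\theta_k,\phi_k)=0\quad\text{for all }(m,n)\text{ with } m \text{ even},\ n\text{ odd},\ 0<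 m\le n\le N.$$
   Context: For integers $|m|\le n$, the spherical harmonic of degree $n$ and order $m$ is $$Y_n^m(\theta,\phi)=(-1)^m\sqrt{\frac{2n+1}{4\pi}\frac{(n-m)!}{(n+m)!}}\,P_n^m(\cos\theta)\,e^{im\phi},$$ where $P_n^m$ is the associated Legendre function (with the standard definition for negative $m$), regarded as a function on $S^2$ via polar coordinates $(\theta,\phi)\in[0,\pi]\times[0,2\pi)$. These satisfy $\int_{S^2}Y_n^m\,d\sigma=\sqrt{4\pi}\,\delta_{n0}\delta_{m0}$, so the first system in the claim expresses that $Q_K$ integrates exactly all spherical harmonics of degree at most $N$. *)

From Stdlib Require Import Reals Lra Lia ZArith Arith List.
Open Scope R_scope.

(* ---------- univariate real polynomials as coefficient lists (low degree first) ---------- *)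
Fixpoint peval (p : list R) (x : R) : R :=
  match p with nil => 0 | a :: q => a + x * peval q x end.

Fixpoint padd (p q : list R) : list R :=
  match p, q with
  | nil, _ => q
  | _, nil => p
  | a :: p', b :: q' => (a + b) :: padd p' q'
  end.

Fixpoint pmul (p q : list R) : list R :=
  match p with
  | nil => nil
  | a :: p' => padd (map (Rmult a) q) (0 :: pmul p' q)
  end.

Fixpoint ppow (p : list R) (n : nat) : list R :=
  match n with O => 1 :: nil | S n' => pmul p (ppow p n') end.

Fixpoint pderiv_aux (i : nat) (p : list R) : list R :=
  match p with nil => nil | a :: q => (INR i * a) :: pderiv_aux (S i) q end.

Definition pderiv (p : list R) : list R :=
  match p with nil => nil | _ :: q => pderiv_aux 1 q end.

Definition pderivn (k : nat) (p : list R) : list R := Nat.iter k pderiv p.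

(* ---------- Legendre polynomials (Rodrigues' formula) ---------- *)
Definition legendre (n : nat) : list R :=
  map (Rmult (/ (2 ^ n * INR (fact n))))
      (pderivn n (ppow ((-1) :: 0 :: 1 :: nil) n)).

(* associated Legendre function for m >= 0:
   P_n^m(x) = (1 - x^2)^{m/2} d^m/dx^m P_n(x)  (no Condon-Shortley phase;
   the phase (-1)^m appears explicitly in Y_n^m) *)
Definition assoc_legendre_nat (n m : nat) (x : R) : R :=
  (sqrt (1 - x ^ 2)) ^ m * peval (pderivn m (legendre n)) x.

Definition assoc_legendre (n : nat) (m : Z) (x : R) : R :=
  if (0 <=? m)%Z then assoc_legendre_nat n (Z.to_nat m) x
  else let m' := Z.to_nat (- m) in
       (-1) ^ m' * (INR (fact (n - m')) / INR (fact (n + m')))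
       * assoc_legendre_nat n m' x.

(* Y_n^m(θ,φ) = (-1)^m sqrt((2n+1)/(4π) (n-m)!/(n+m)!) P_n^m(cos θ) e^{imφ} *)
Definition sph_coef (n : nat) (m : Z) : R :=
  (-1) ^ (Z.abs_nat m) *
  sqrt ((2 * INR n + 1) / (4 * PI) *
        (INR (fact (Z.to_nat (Z.of_nat n - m))) /
         INR (fact (Z.to_nat (Z.of_nat n + m))))).

Definition Y_re (n : nat) (m : Z) (theta phi : R) : R :=
  sph_coef n m * assoc_legendre n m (cos theta) * cos (IZR m * phi).

Definition Y_im (n : nat) (m : Z) (theta phi : R) : R :=
  sph_coef n m * assoc_legendre n m (cos theta) * sin (IZR m * phi).

Definition sumK (K : nat) (f : nat -> R) : R :=
  fold_right Rplus 0 (map f (seq 0 K)).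

Definition QY_re (K : nat) (w theta phi : nat -> R) (n : nat) (m : Z) : R :=
  sumK K (fun k => w k * Y_re n m (theta k) (phi k)).
Definition QY_im (K : nat) (w theta phi : nat -> R) (n : nat) (m : Z) : R :=
  sumK K (fun k => w k * Y_im n m (theta k) (phi k)).

Definition delta00 (n : nat) (m : Z) : R :=
  if andb (Nat.eqb n 0) (Z.eqb m 0) then 1 else 0.

Definition point3 : Type := (R * R * R)%type.

Definition sph_point (theta phi : R) : point3 :=
  (sin theta * cos phi, sin theta * sin phi, cos theta).

Definition Rz (p : point3) : point3 :=
  match p with (x, y, z) => (- x, - y, z) end.
Definition Rx (p : point3) : point3 :=
  match p with (x, y, z) => (x, - y, - z) end.

(* Both reflections permute the nodes and preserve the weights, so every moment
   Q_K(Y_n^m) equals a signed copy of itself.  Since P_n^m(-x) = (-1)^(n+m) P_n^m(x),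
   R_z multiplies Y_n^m by (-1)^m and R_x maps Y_n^m to (-1)^(n+m) times its conjugate.
   Hence the moments of odd order vanish, the real parts vanish for n + m odd, and
   the imaginary parts vanish for n + m even.  Together with
   Y_n^{-m} = (-1)^m conj(Y_n^m) and Im Q_K(Y_n^0) = 0, the only equations left are
   the listed real ones (m, n even) and imaginary ones (m even, n odd). *)

From Stdlib Require Import Reals ZArith Arith List.
From Stdlib Require Import Lra Lia Permutation ClassicalEpsilon.
Open Scope R_scope.

(** * Parity of polynomials *)

Definition has_parity (b : bool) (p : list R) : Prop :=
  forall i, nth i p 0 <> 0 -> Nat.even i = b.

Lemma nth_padd p q i : nth i (padd p q) 0 = nth i p 0 + nth i q 0.
Proof.
  revert q i; induction p as [|a p IH]; intros [|c q] i; destruct i; simpl; try ring.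
  apply IH.
Qed.

Lemma nth_map_Rmult a p i : nth i (map (Rmult a) p) 0 = a * nth i p 0.
Proof. revert i; induction p as [|c p IH]; intros [|i]; simpl; try ring; apply IH. Qed.

Lemma nth_pderiv_aux q s i : nth i (pderiv_aux s q) 0 = INR (s + i) * nth i q 0.
Proof.
  revert s i; induction q as [|a q IH]; intros s [|i]; simpl; try ring.
  - rewrite Nat.add_0_r. reflexivity.
  - rewrite IH, Nat.add_succ_r. reflexivity.
Qed.

Lemma nth_pderiv p i : nth i (pderiv p) 0 = INR (S i) * nth (S i) p 0.
Proof.
  destruct p as [|a q]; simpl.
  - destruct i; simpl; ring.
  - apply nth_pderiv_aux.
Qed.

Lemma even_S i : Nat.even (S i) = negb (Nat.even i).
Proof. rewrite Nat.even_succ, <- Nat.negb_even. reflexivity. Qed.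

Lemma has_parity_nil b : has_parity b nil.
Proof. intros [|i] H; simpl in H; lra. Qed.

Lemma has_parity_padd b p q : has_parity b p -> has_parity b q -> has_parity b (padd p q).
Proof.
  intros Hp Hq i H. rewrite nth_padd in H.
  destruct (Req_dec (nth i p 0) 0); [apply Hq; lra | now apply Hp].
Qed.

Lemma has_parity_map_Rmult b a p : has_parity b p -> has_parity b (map (Rmult a) p).
Proof.
  intros Hp i H. rewrite nth_map_Rmult in H. apply Hp.
  intro E; apply H; rewrite E; ring.
Qed.

Lemma has_parity_map_Rmult0 b p : has_parity b (map (Rmult 0) p).
Proof. intros i H. rewrite nth_map_Rmult in H. lra. Qed.

Lemma has_parity_cons0 b p : has_parity b p -> has_parity (negb b) (0 :: p).
Proof.
  intros Hp [|i] H; simpl in H; [lra|].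
  rewrite even_S, (Hp i H). reflexivity.
Qed.

Lemma has_parity_tail b a p : has_parity b (a :: p) -> has_parity (negb b) p.
Proof.
  intros Hp i H. generalize (Hp (S i) H). rewrite even_S.
  destruct (Nat.even i), b; simpl; congruence.
Qed.

Lemma has_parity_head b a p : has_parity b (a :: p) -> a <> 0 -> b = true.
Proof. intros Hp Ha. symmetry. exact (Hp 0%nat Ha). Qed.

Lemma has_parity_pmul b1 b2 p q :
  has_parity b1 p -> has_parity b2 q -> has_parity (Bool.eqb b1 b2) (pmul p q).
Proof.
  revert b1; induction p as [|a p IH]; intros b1 Hp Hq; simpl; [apply has_parity_nil|].
  apply has_parity_padd.
  - destruct (Req_dec a 0) as [->|Ha]; [apply has_parity_map_Rmult0|].
    rewrite (has_parity_head _ _ _ Hp Ha). destruct b2; apply has_parity_map_Rmult, Hq.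
  - generalize (has_parity_cons0 _ _ (IH _ (has_parity_tail _ _ _ Hp) Hq)).
    destruct b1, b2; exact (fun H => H).
Qed.

Lemma has_parity_ppow p n : has_parity true p -> has_parity true (ppow p n).
Proof.
  intros Hp; induction n as [|n IH]; simpl.
  - intros [|[|i]] H; simpl in H; [reflexivity | lra | destruct i; simpl in H; lra].
  - exact (has_parity_pmul _ _ _ _ Hp IH).
Qed.

Lemma has_parity_pderivn j k p :
  has_parity (Nat.even j) p -> has_parity (Nat.even (j + k)) (pderivn k p).
Proof.
  intros Hp; induction k as [|k IH]; [now rewrite Nat.add_0_r|].
  intros i H. change (pderivn (S k) p) with (pderiv (pderivn k p)) in H.
  rewrite nth_pderiv in H.
  assert (Hc : nth (S i) (pderivn k p) 0 <> 0) by (intro E; apply H; rewrite E; ring).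
  generalize (IH _ Hc). rewrite Nat.add_succ_r, !even_S.
  destruct (Nat.even i), (Nat.even (j + k)); simpl; congruence.
Qed.

Lemma has_parity_legendre_deriv n m :
  has_parity (Nat.even (n + m)) (pderivn m (legendre n)).
Proof.
  apply has_parity_pderivn, has_parity_map_Rmult, (has_parity_pderivn 0 n), has_parity_ppow.
  intros [|[|[|i]]] H; simpl in H; try reflexivity; [lra | destruct i; simpl in H; lra].
Qed.

Lemma sign_even k : (if Nat.even k then 1 else -1) = (-1) ^ k.
Proof.
  induction k as [|k IH]; [reflexivity|].
  rewrite even_S. simpl. rewrite <- IH. destruct (Nat.even k); simpl; ring.
Qed.

Lemma peval_opp b p x : has_parity b p -> peval p (- x) = (if b then 1 else -1) * peval p x.
Proof.
  revert b; induction p as [|a q IH]; intros b Hp; simpl; [ring|].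
  rewrite (IH _ (has_parity_tail _ _ _ Hp)).
  destruct b; simpl; [ring|].
  destruct (Req_dec a 0) as [->|Ha]; [ring | discriminate (has_parity_head _ _ _ Hp Ha)].
Qed.

(** * Associated Legendre functions *)

Lemma assoc_legendre_nat_opp n m x :
  assoc_legendre_nat n m (- x) = (-1) ^ (n + m) * assoc_legendre_nat n m x.
Proof.
  unfold assoc_legendre_nat.
  rewrite (peval_opp _ _ x (has_parity_legendre_deriv n m)), sign_even.
  replace ((- x) ^ 2) with (x ^ 2) by ring. ring.
Qed.

Lemma assoc_legendre_opp n m x :
  assoc_legendre n m (- x) = (-1) ^ (n + Z.abs_nat m) * assoc_legendre n m x.
Proof.
  unfold assoc_legendre. destruct m; simpl; rewrite assoc_legendre_nat_opp; ring.
Qed.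

Lemma assoc_legendre_pole n m x : x ^ 2 = 1 -> m <> 0%Z -> assoc_legendre n m x = 0.
Proof.
  intros Hx Hm.
  assert (Hnat : forall k, (0 < k)%nat -> assoc_legendre_nat n k x = 0).
  { intros k Hk. unfold assoc_legendre_nat.
    replace (1 - x ^ 2) with 0 by lra. rewrite sqrt_0, pow_i by exact Hk. ring. }
  unfold assoc_legendre. destruct m; simpl; [congruence | | rewrite Hnat; [ring|]];
    try apply Hnat; lia.
Qed.

Lemma sqrt_mul_ratio A a b : 0 <= A -> 0 < a -> 0 < b ->
  sqrt (A * (b / a)) * (a / b) = sqrt (A * (a / b)).
Proof.
  intros HA Ha Hb.
  assert (Hab : 0 <= A * (b / a)) by (apply Rmult_le_pos; [lra | apply Rlt_le, Rdiv_lt_0_compat; lra]).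
  symmetry. apply sqrt_lem_1.
  - apply Rmult_le_pos; [lra | apply Rlt_le, Rdiv_lt_0_compat; lra].
  - apply Rmult_le_pos; [apply sqrt_pos | apply Rlt_le, Rdiv_lt_0_compat; lra].
  - replace (sqrt (A * (b / a)) * (a / b) * (sqrt (A * (b / a)) * (a / b)))
      with (sqrt (A * (b / a)) * sqrt (A * (b / a)) * ((a / b) * (a / b))) by ring.
    rewrite sqrt_sqrt by exact Hab. field; lra.
Qed.

Lemma sph_coef_assoc_legendre_opp n (k : nat) x : (k <= n)%nat ->
  sph_coef n (- Z.of_nat k) * assoc_legendre n (- Z.of_nat k) x
  = (-1) ^ k * (sph_coef n (Z.of_nat k) * assoc_legendre n (Z.of_nat k) x).
Proof.
  intros Hk. destruct k as [|k]; [simpl; ring|].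
  unfold sph_coef, assoc_legendre.
  replace (Z.abs_nat (- Z.of_nat (S k))) with (S k) by lia.
  replace (Z.abs_nat (Z.of_nat (S k))) with (S k) by lia.
  replace (Z.to_nat (Z.of_nat n - - Z.of_nat (S k))) with (n + S k)%nat by lia.
  replace (Z.to_nat (Z.of_nat n + - Z.of_nat (S k))) with (n - S k)%nat by lia.
  replace (Z.to_nat (Z.of_nat n - Z.of_nat (S k))) with (n - S k)%nat by lia.
  replace (Z.to_nat (Z.of_nat n + Z.of_nat (S k))) with (n + S k)%nat by lia.
  replace ((0 <=? - Z.of_nat (S k))%Z) with false by (symmetry; apply Z.leb_gt; lia).
  replace ((0 <=? Z.of_nat (S k))%Z) with true by (symmetry; apply Z.leb_le; lia).
  replace (Z.to_nat (- - Z.of_nat (S k))) with (S k) by lia.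
  rewrite Nat2Z.id, <- (sqrt_mul_ratio ((2 * INR n + 1) / (4 * PI)) (INR (fact (n - S k)))).
  - replace ((-1) ^ S k * (-1) ^ S k) with 1; [ring|].
    rewrite <- pow_add. replace (S k + S k)%nat with (2 * S k)%nat by lia.
    symmetry. apply pow_1_even.
  - apply Rlt_le, Rdiv_lt_0_compat; [pose proof (pos_INR n) | pose proof PI_RGT_0]; lra.
  - apply lt_0_INR, lt_O_fact.
  - apply lt_0_INR, lt_O_fact.
Qed.

(** * Spherical harmonics under the reflections *)

Lemma cos_sin_mult_scaled s a b m : cos a = s * cos b -> sin a = s * sin b ->
  cos (IZR m * a) = s ^ Z.abs_nat m * cos (IZR m * b) /\
  sin (IZR m * a) = s ^ Z.abs_nat m * sin (IZR m * b).
Proof.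
  intros Hc Hs.
  assert (Hnat : forall k, cos (INR k * a) = s ^ k * cos (INR k * b) /\
                           sin (INR k * a) = s ^ k * sin (INR k * b)).
  { induction k as [|k [IHc IHs]]; [simpl; rewrite !Rmult_0_l; split; ring|].
    rewrite S_INR, !Rmult_plus_distr_r, !Rmult_1_l, !cos_plus, !sin_plus, IHc, IHs, Hc, Hs.
    simpl. split; ring. }
  destruct (Hnat (Z.abs_nat m)) as [C S].
  rewrite INR_IZR_INZ, Zabs2Nat.id_abs in C, S.
  destruct (Z_le_gt_dec 0 m).
  - rewrite Z.abs_eq in C, S by lia. split; assumption.
  - rewrite Z.abs_neq, opp_IZR, !Ropp_mult_distr_l_reverse in C, S by lia.
    rewrite !cos_neg in C. rewrite !sin_neg in S.
    split; [exact C | lra].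
Qed.

Lemma sin_eq_of_cos_sqr a b : 0 <= a <= PI -> 0 <= b <= PI ->
  cos a ^ 2 = cos b ^ 2 -> sin a = sin b.
Proof.
  intros Ha Hb H.
  assert (Sa := sin_ge_0 a (proj1 Ha) (proj2 Ha)).
  assert (Sb := sin_ge_0 b (proj1 Hb) (proj2 Hb)).
  assert (Ea := sin2_cos2 a). assert (Eb := sin2_cos2 b). unfold Rsqr in Ea, Eb.
  assert (E : (sin a - sin b) * (sin a + sin b) = 0) by nra.
  apply Rmult_integral in E. destruct E; nra.
Qed.

Lemma cos_sqr_of_sin0 a : sin a = 0 -> cos a ^ 2 = 1.
Proof. intros H. assert (E := sin2_cos2 a). unfold Rsqr in E. rewrite H in E. nra. Qed.

Lemma Y_Rz n m tj pj tk pk : 0 <= tj <= PI -> 0 <= tk <= PI ->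
  sph_point tj pj = Rz (sph_point tk pk) ->
  Y_re n m tj pj = (-1) ^ Z.abs_nat m * Y_re n m tk pk /\
  Y_im n m tj pj = (-1) ^ Z.abs_nat m * Y_im n m tk pk.
Proof.
  intros Hj Hk H. unfold sph_point, Rz in H. injection H as H1 H2 H3.
  assert (Es : sin tj = sin tk) by (apply sin_eq_of_cos_sqr; auto; rewrite H3; ring).
  unfold Y_re, Y_im. rewrite H3.
  destruct (Z.eq_dec m 0) as [->|Hm]; [simpl; rewrite !Rmult_0_l; split; ring|].
  destruct (Req_dec (sin tk) 0) as [Z0|NZ]; [rewrite assoc_legendre_pole by auto using cos_sqr_of_sin0; split; ring|].
  rewrite Es in H1, H2.
  destruct (cos_sin_mult_scaled (-1) pj pk m) as [C S];
    try (apply (Rmult_eq_reg_l (sin tk)); [lra | auto]).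
  rewrite C, S. split; ring.
Qed.

Lemma Y_Rx n m tj pj tk pk : 0 <= tj <= PI -> 0 <= tk <= PI ->
  sph_point tj pj = Rx (sph_point tk pk) ->
  Y_re n m tj pj = (-1) ^ (n + Z.abs_nat m) * Y_re n m tk pk /\
  Y_im n m tj pj = - ((-1) ^ (n + Z.abs_nat m) * Y_im n m tk pk).
Proof.
  intros Hj Hk H. unfold sph_point, Rx in H. injection H as H1 H2 H3.
  assert (Es : sin tj = sin tk) by (apply sin_eq_of_cos_sqr; auto; rewrite H3; ring).
  unfold Y_re, Y_im. rewrite H3, assoc_legendre_opp.
  destruct (Z.eq_dec m 0) as [->|Hm]; [simpl; rewrite !Rmult_0_l, sin_0; split; ring|].
  destruct (Req_dec (sin tk) 0) as [Z0|NZ]; [rewrite assoc_legendre_pole by auto using cos_sqr_of_sin0; split; ring|].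
  rewrite Es in H1, H2.
  destruct (cos_sin_mult_scaled 1 pj (- pk) m) as [C S];
    try (rewrite ?cos_neg, ?sin_neg; apply (Rmult_eq_reg_l (sin tk)); [lra | lra]).
  rewrite pow1, Ropp_mult_distr_r_reverse in C, S. rewrite cos_neg in C. rewrite sin_neg in S.
  rewrite C, S. split; ring.
Qed.

Lemma sumK_ext K f g : (forall k, (k < K)%nat -> f k = g k) -> sumK K f = sumK K g.
Proof.
  intros H. unfold sumK. f_equal. apply map_ext_in.
  intros k Hk. apply in_seq in Hk. apply H. lia.
Qed.

Lemma sumK_scal K c f : sumK K (fun k => c * f k) = c * sumK K f.
Proof. unfold sumK. induction (seq 0 K) as [|a l IH]; simpl; [ring|]. rewrite IH. ring. Qed.

Lemma sumK_involution K f (s : nat -> nat) :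
  (forall k, (k < K)%nat -> (s k < K)%nat /\ s (s k) = k) ->
  sumK K (fun k => f (s k)) = sumK K f.
Proof.
  intros Hs. unfold sumK. rewrite <- map_map.
  assert (Hperm : Permutation (seq 0 K) (map s (seq 0 K))).
  { apply Permutation_sym, Permutation_map_same_l.
    - apply FinFun.Injective_map_NoDup_in; [|apply seq_NoDup].
      intros x y Hx Hy E. apply in_seq in Hx, Hy.
      rewrite <- (proj2 (Hs x ltac:(lia))), <- (proj2 (Hs y ltac:(lia))), E. reflexivity.
    - intros y Hy. apply in_map_iff in Hy. destruct Hy as [x [<- Hx]].
      apply in_seq in Hx. apply in_seq. specialize (Hs x ltac:(lia)). lia. }
  induction (Permutation_map f Hperm); simpl; lra.
Qed.

Lemma sumK_eq_scale_of_involution K g (s : nat -> nat) c :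
  (forall k, (k < K)%nat -> (s k < K)%nat /\ s (s k) = k) ->
  (forall k, (k < K)%nat -> g (s k) = c * g k) -> sumK K g = c * sumK K g.
Proof.
  intros Hs Hg. rewrite <- sumK_scal, <- (sumK_involution K g s Hs).
  apply sumK_ext. exact Hg.
Qed.

(* The uniqueness clause of the symmetry hypotheses is what makes the node map an involution. *)
Lemma node_involution K (pt : nat -> point3) (w : nat -> R) (T : point3 -> point3) :
  (forall p, T (T p) = p) ->
  (forall k, (k < K)%nat -> exists j, (j < K)%nat /\ pt j = T (pt k) /\ w j = w k /\
       (forall j', (j' < K)%nat -> pt j' = T (pt k) -> j' = j)) ->
  exists s : nat -> nat, forall k, (k < K)%nat ->
    ((s k < K)%nat /\ s (s k) = k) /\ pt (s k) = T (pt k) /\ w (s k) = w k.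
Proof.
  intros TT H.
  set (s := fun k => match lt_dec k K with
                     | left Hk => proj1_sig (constructive_indefinite_description _ (H k Hk))
                     | right _ => 0%nat end).
  assert (Hs : forall k, (k < K)%nat -> (s k < K)%nat /\ pt (s k) = T (pt k) /\ w (s k) = w k /\
       (forall j', (j' < K)%nat -> pt j' = T (pt k) -> j' = s k)).
  { intros k Hk. unfold s. destruct (lt_dec k K) as [Hk'|]; [apply proj2_sig | lia]. }
  exists s. intros k Hk.
  destruct (Hs k Hk) as [Hk1 [Hk2 [Hk3 _]]].
  destruct (Hs (s k) Hk1) as [_ [_ [_ U]]].
  repeat split; auto. symmetry. apply U; [exact Hk|]. rewrite Hk2, TT. reflexivity.
Qed.

Section Moments.

Variables (K : nat) (w theta phi : nat -> R).
Hypothesis Hpolar : forall k, (k < K)%nat -> 0 <= theta k <= PI.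

Let pt k := sph_point (theta k) (phi k).

Lemma QY_opp_order n a : (a <= n)%nat ->
  QY_re K w theta phi n (- Z.of_nat a) = (-1) ^ a * QY_re K w theta phi n (Z.of_nat a) /\
  QY_im K w theta phi n (- Z.of_nat a) = - ((-1) ^ a * QY_im K w theta phi n (Z.of_nat a)).
Proof.
  intros Ha. unfold QY_re, QY_im.
  rewrite Ropp_mult_distr_l, <- !sumK_scal.
  split; apply sumK_ext; intros k _; unfold Y_re, Y_im;
    rewrite sph_coef_assoc_legendre_opp, opp_IZR, Ropp_mult_distr_l_reverse,
      ?cos_neg, ?sin_neg by exact Ha; ring.
Qed.

Lemma QY_im_order0 n : QY_im K w theta phi n 0 = 0.
Proof.
  unfold QY_im. rewrite <- (Rmult_0_l (sumK K (fun _ => 0))), <- sumK_scal.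
  apply sumK_ext. intros k _. unfold Y_im. rewrite Rmult_0_l, sin_0. ring.
Qed.

Lemma QY_Rz_parity (s : nat -> nat) :
  (forall k, (k < K)%nat -> ((s k < K)%nat /\ s (s k) = k) /\ pt (s k) = Rz (pt k) /\ w (s k) = w k) ->
  forall n m,
  QY_re K w theta phi n m = (-1) ^ Z.abs_nat m * QY_re K w theta phi n m /\
  QY_im K w theta phi n m = (-1) ^ Z.abs_nat m * QY_im K w theta phi n m.
Proof.
  intros Hs n m. unfold QY_re, QY_im.
  split; apply (sumK_eq_scale_of_involution K _ s); try (intros k Hk; apply Hs, Hk);
    intros k Hk; destruct (Hs k Hk) as [[Hk1 _] [Hk2 Hk3]];
    destruct (Y_Rz n m _ _ _ _ (Hpolar _ Hk1) (Hpolar _ Hk) Hk2) as [Hre Him];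
    rewrite ?Hre, ?Him, Hk3; ring.
Qed.

Lemma QY_Rx_parity (s : nat -> nat) :
  (forall k, (k < K)%nat -> ((s k < K)%nat /\ s (s k) = k) /\ pt (s k) = Rx (pt k) /\ w (s k) = w k) ->
  forall n m,
  QY_re K w theta phi n m = (-1) ^ (n + Z.abs_nat m) * QY_re K w theta phi n m /\
  QY_im K w theta phi n m = - (-1) ^ (n + Z.abs_nat m) * QY_im K w theta phi n m.
Proof.
  intros Hs n m. unfold QY_re, QY_im.
  split; apply (sumK_eq_scale_of_involution K _ s); try (intros k Hk; apply Hs, Hk);
    intros k Hk; destruct (Hs k Hk) as [[Hk1 _] [Hk2 Hk3]];
    destruct (Y_Rx n m _ _ _ _ (Hpolar _ Hk1) (Hpolar _ Hk) Hk2) as [Hre Him];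
    rewrite ?Hre, ?Him, Hk3; ring.
Qed.

End Moments.

(** * Reduction of the moment system *)

Lemma pow_m1_even k : Nat.Even k -> (-1) ^ k = 1.
Proof. intros [p ->]. apply pow_1_even. Qed.

Lemma pow_m1_odd k : Nat.Odd k -> (-1) ^ k = -1.
Proof. intros [p ->]. rewrite Nat.add_1_r. apply pow_1_odd. Qed.

Lemma delta00_order n m : m <> 0%Z -> delta00 n m = 0.
Proof. intros H. unfold delta00. rewrite (proj2 (Z.eqb_neq m 0) H), Bool.andb_false_r. reflexivity. Qed.

Lemma delta00_degree n m : n <> 0%nat -> delta00 n m = 0.
Proof. intros H. unfold delta00. rewrite (proj2 (Nat.eqb_neq n 0) H). reflexivity. Qed.

Lemma moment_system_of_reduced (N : nat) (re im : nat -> Z -> R) (c : R) :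
  (forall n m, re n m = (-1) ^ Z.abs_nat m * re n m /\ im n m = (-1) ^ Z.abs_nat m * im n m) ->
  (forall n m, re n m = (-1) ^ (n + Z.abs_nat m) * re n m /\
               im n m = - (-1) ^ (n + Z.abs_nat m) * im n m) ->
  (forall n a, (a <= n)%nat -> re n (- Z.of_nat a)%Z = (-1) ^ a * re n (Z.of_nat a) /\
                               im n (- Z.of_nat a)%Z = - ((-1) ^ a * im n (Z.of_nat a))) ->
  (forall n, im n 0%Z = 0) ->
  (forall n m : nat, Nat.Even m -> Nat.Even n -> (m <= n)%nat -> (n <= N)%nat ->
      re n (Z.of_nat m) = c * delta00 n (Z.of_nat m)) ->
  (forall n m : nat, Nat.Even m -> Nat.Odd n -> (0 < m)%nat -> (m <= n)%nat -> (n <= N)%nat ->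
      im n (Z.of_nat m) = 0) ->
  forall (n : nat) (m : Z), (n <= N)%nat -> (Z.abs m <= Z.of_nat n)%Z ->
    re n m = c * delta00 n m /\ im n m = 0.
Proof.
  intros Hz Hx Hopp Him0 Hre Him n m HnN Hmn.
  destruct (Hz n m) as [Hz_re Hz_im]. destruct (Hx n m) as [Hx_re Hx_im].
  set (a := Z.abs_nat m) in *.
  assert (Ham : m = Z.of_nat a \/ m = (- Z.of_nat a)%Z) by (unfold a; lia).
  assert (Han : (a <= n)%nat) by (unfold a; lia).
  clearbody a.
  destruct (Nat.Even_or_Odd a) as [Ea|Oa].
  2: { assert (m <> 0%Z) by (destruct Oa; lia).
       rewrite pow_m1_odd in Hz_re, Hz_im by exact Oa.
       rewrite delta00_order by assumption. split; lra. }
  destruct (Nat.Even_or_Odd n) as [En|On].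
  - rewrite pow_m1_even in Hx_im by (apply Nat.Even_Even_add; assumption).
    split; [|lra].
    destruct Ham as [-> | ->]; [apply Hre; assumption|].
    rewrite (proj1 (Hopp n a Han)), pow_m1_even, Rmult_1_l, Hre by assumption.
    destruct (Nat.eq_dec a 0) as [-> | A0]; [reflexivity|].
    rewrite !delta00_order by lia. reflexivity.
  - rewrite pow_m1_odd in Hx_re by (destruct On as [p Hp]; destruct Ea as [q Hq]; exists (p + q)%nat; lia).
    rewrite delta00_degree by (intro; subst; destruct On as [p Hp]; lia).
    split; [lra|].
    destruct (Nat.eq_dec a 0) as [A0|A0]; [replace m with 0%Z by lia; apply Him0|].
    destruct Ham as [-> | ->]; [apply Him; auto; lia|].
    rewrite (proj2 (Hopp n a Han)), Him by (auto; lia). ring.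
Qed.

Theorem theorem1 (N K : nat) (w theta phi : nat -> R)
  (Hpolar : forall k, (k < K)%nat -> 0 <= theta k <= PI /\ 0 <= phi k < 2 * PI)
  (Hsym_z : forall k, (k < K)%nat ->
     exists j, (j < K)%nat
       /\ sph_point (theta j) (phi j) = Rz (sph_point (theta k) (phi k))
       /\ w j = w k
       /\ (forall j', (j' < K)%nat ->
             sph_point (theta j') (phi j') = Rz (sph_point (theta k) (phi k)) -> j' = j))
  (Hsym_x : forall k, (k < K)%nat ->
     exists j, (j < K)%nat
       /\ sph_point (theta j) (phi j) = Rx (sph_point (theta k) (phi k))
       /\ w j = w k
       /\ (forall j', (j' < K)%nat ->
             sph_point (theta j') (phi j') = Rx (sph_point (theta k) (phi k)) -> j' = j)) :
  (forall (n : nat) (m : Z), (n <= N)%nat -> (Z.abs m <= Z.of_nat n)%Z ->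
      QY_re K w theta phi n m = sqrt (4 * PI) * delta00 n m
      /\ QY_im K w theta phi n m = 0)
  <->
  ((forall n m : nat, Nat.Even m -> Nat.Even n -> (m <= n)%nat -> (n <= N)%nat ->
      QY_re K w theta phi n (Z.of_nat m) = sqrt (4 * PI) * delta00 n (Z.of_nat m))
   /\
   (forall n m : nat, Nat.Even m -> Nat.Odd n -> (0 < m)%nat -> (m <= n)%nat -> (n <= N)%nat ->
      QY_im K w theta phi n (Z.of_nat m) = 0)).
Proof.
  assert (Htheta : forall k, (k < K)%nat -> 0 <= theta k <= PI) by (intros k Hk; apply Hpolar, Hk).
  split.
  - intros H. split; intros; apply H; lia.
  - intros [Hre Him].
    destruct (node_involution K (fun k => sph_point (theta k) (phi k)) w Rz) as [sz Hz];
      [intros [[x y] z]; simpl; rewrite !Ropp_involutive; reflexivity | exact Hsym_z |].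
    destruct (node_involution K (fun k => sph_point (theta k) (phi k)) w Rx) as [sx Hx];
      [intros [[x y] z]; simpl; rewrite !Ropp_involutive; reflexivity | exact Hsym_x |].
    apply moment_system_of_reduced; auto.
    + exact (QY_Rz_parity K w theta phi Htheta sz Hz).
    + exact (QY_Rx_parity K w theta phi Htheta sx Hx).
    + apply QY_opp_order.
    + apply QY_im_order0.
Qed.
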